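(* Let $l$ be a prime and $n\ge 2$. For $1\le r\le n$ let $\alpha_r\in S_{l^n}$ be the product of the $l^{r-1}$ disjoint $l$-cycles $(j,\ j+l^{r-1},\ j+2l^{r-1},\dots,\ j+(l-1)l^{r-1})$, $j=1,\dots,l^{r-1}$ (so $\alpha_1=(1\,2\,\cdots\,l)$), and let $\mathcal{G}_n=\langle\alpha_1,\dots,\alpha_n\rangle$, an $l$-Sylow subgroup of $S_{l^n}$ isomorphic to the $n$-fold iterated wreath product $(\cdots((C_l\wr C_l)\wr C_l)\cdots)\wr C_l$. Let $\mathcal{H}=\langle\alpha_1\rangle$. If $n\ge 3$, or if $n=2$ and $l\ge 5$, then every metacyclic subgroup $D\le\mathcal{G}_n$ satisfies $S(D,\mathcal{H})>1$ (double cosets in $\mathcal{G}_n$).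
   Context: A group is metacyclic if it has a cyclic normal subgroup with cyclic quotient. For subgroups $A,B$ of a finite group $\mathcal{G}$, a double coset $AxB$ is split if $|AxB|=|A||B|$ (equivalently $x^{-1}Ax\cap B=1$), and $S(A,B)$ is the number of distinct split double cosets. *)

From HB Require Import structures.
From mathcomp Require Import all_boot all_order all_fingroup all_solvable.
Set Implicit Arguments. Unset Strict Implicit. Unset Printing Implicit Defensive.


(* 0-indexed version of alpha_r on {0, ..., l^n - 1}: the point
   j + k*l^(r-1) (j < l^(r-1), k < l) is sent to j + ((k+1) mod l)*l^(r-1);
   points >= l^r are fixed. *)
Definition alpha_fun (l r i : nat) : nat :=
  if [&& 0 < l, 0 < r & i < l ^ r] then
    i %% l ^ r.-1 + (i %/ l ^ r.-1).+1 %% l * l ^ r.-1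
  else i.


Lemma alpha_fun_lt l r i : 0 < l -> 0 < r -> i < l ^ r -> alpha_fun l r i < l ^ r.
Proof.
move=> l0 r0 ir; rewrite /alpha_fun l0 r0 ir /=.
have p0 : 0 < l ^ r.-1 by rewrite expn_gt0 l0.
have -> : l ^ r = (l.-1 * l ^ r.-1 + l ^ r.-1).
  by rewrite -{2}[l ^ r.-1]mul1n -mulnDl addn1 prednK // -expnS prednK.
rewrite addnC -addnS; apply: leq_add; last exact: ltn_pmod.
by rewrite leq_mul2r -ltnS prednK // ltn_pmod // orbT.
Qed.

Lemma alpha_fun_small l r i : 0 < l -> 0 < r -> i < l ^ r ->
  (alpha_fun l r i %% l ^ r.-1 = i %% l ^ r.-1) /\
  (alpha_fun l r i %/ l ^ r.-1 = (i %/ l ^ r.-1).+1 %% l).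
Proof.
move=> l0 r0 ir; rewrite /alpha_fun l0 r0 ir /=.
have p0 : 0 < l ^ r.-1 by rewrite expn_gt0 l0.
split; first by rewrite addnC modnMDl modn_mod.
by rewrite addnC (divnMDl _ (i %% l ^ r.-1) p0) (divn_small (ltn_pmod _ p0)) addn0.
Qed.

Lemma alpha_fun_inj l r n (i j : 'I_(l ^ n)) : r <= n ->
  alpha_fun l r i = alpha_fun l r j -> i = j.
Proof.
move=> rn.
have key : forall a b : nat, 0 < l -> 0 < r -> a < l ^ r -> b < l ^ r ->
    alpha_fun l r a = alpha_fun l r b -> a = b.
  move=> a b l0 r0 ar br e.
  have [A1 A2] := alpha_fun_small l0 r0 ar.
  have [B1 B2] := alpha_fun_small l0 r0 br.
  have p0 : 0 < l ^ r.-1 by rewrite expn_gt0 l0.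
  have hr : l ^ r = l * l ^ r.-1 by rewrite -expnS prednK.
  have qa : a %/ l ^ r.-1 < l by rewrite ltn_divLR // -hr.
  have qb : b %/ l ^ r.-1 < l by rewrite ltn_divLR // -hr.
  have em : a %% l ^ r.-1 = b %% l ^ r.-1 by rewrite -A1 -B1 e.
  have eq : a %/ l ^ r.-1 = b %/ l ^ r.-1.
    have : (a %/ l ^ r.-1) + 1 = (b %/ l ^ r.-1) + 1 %[mod l].
      by rewrite !addn1 -A2 -B2 e.
    by move/eqP; rewrite eqn_modDr !modn_small // => /eqP.
  by rewrite (divn_eq a (l ^ r.-1)) (divn_eq b (l ^ r.-1)) em eq.
case: (boolP [&& 0 < l, 0 < r & i < l ^ r]) => hi;
case: (boolP [&& 0 < l, 0 < r & j < l ^ r]) => hj.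
- case/and3P: hi => l0 r0 ir; case/and3P: hj => _ _ jr.
  by move=> e; apply/val_inj/(key _ _ l0 r0 ir jr e).
- case/and3P: hi => l0 r0 ir; rewrite {2}/alpha_fun (negbTE hj) => e.
  move: (alpha_fun_lt l0 r0 ir); rewrite e => jr; rewrite l0 r0 jr in hj; done.
- case/and3P: hj => l0 r0 jr; rewrite {1}/alpha_fun (negbTE hi) => e.
  move: (alpha_fun_lt l0 r0 jr); rewrite -e => ir; rewrite l0 r0 ir in hi; done.
- by rewrite /alpha_fun (negbTE hi) (negbTE hj) => /val_inj.
Qed.

Lemma alpha_fun_bound l r n (i : 'I_(l ^ n)) : r <= n -> alpha_fun l r i < l ^ n.
Proof.
move=> rn; case: (boolP [&& 0 < l, 0 < r & i < l ^ r]) => hi.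
  case/and3P: hi => l0 r0 ir; apply: (leq_trans (alpha_fun_lt l0 r0 ir)).
  by rewrite leq_pexp2l.
by rewrite /alpha_fun (negbTE hi).
Qed.

Definition alpha_ffun l n (r : 'I_n) : {ffun 'I_(l ^ n) -> 'I_(l ^ n)} :=
  [ffun i => Ordinal (@alpha_fun_bound l r.+1 n i (ltn_ord r))].

Lemma alpha_ffun_inj l n (r : 'I_n) : injective (alpha_ffun l r).
Proof.
move=> i j; rewrite !ffunE => /(congr1 val) /= e.
exact: (alpha_fun_inj (ltn_ord r) e).
Qed.

Local Open Scope group_scope.

(* alpha l n r  is  alpha_{r+1}  of the paper, for r : 'I_n *)
Definition alpha l n (r : 'I_n) : {perm 'I_(l ^ n)} := perm (@alpha_ffun_inj l n r).

Definition Gn l n : {group {perm 'I_(l ^ n)}} :=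
  <<[set alpha l r | r : 'I_n]>>%G.

Definition Hgrp l n (hn : 0 < n) : {group {perm 'I_(l ^ n)}} :=
  <[alpha l (Ordinal hn)]>%G.

Definition dcoset (gT : finGroupType) (A B : {set gT}) (x : gT) : {set gT} :=
  (A :* x) * B.

Definition Ssplit (gT : finGroupType) (G A B : {set gT}) : nat :=
  #|[set dcoset A B x | x in G & #|dcoset A B x| == (#|A| * #|B|)%N]|.

From mathcomp Require Import all_boot all_order all_fingroup all_solvable.
Set Implicit Arguments. Unset Strict Implicit. Unset Printing Implicit Defensive.
Local Open Scope group_scope.

(* A metacyclic group of exponent dividing l has order
   at most l^2, so it cannot contain three commuting elements of order l that
   are "independent" (witnessed by three points, each moved only by one of
   them).  For H = <[a]> of prime order, D x H is split iff a is not in D^x, and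
   this is preserved by right multiplication by any c centralising a.  Hence
   if g1, g2, g3 are such that the a^g_i commute with a and no metacyclic group
   contains all three twisted conjugates a^g_i * h_i (h_i in H), then there is
   a split double coset D x H, and some x * a^g_i gives a second one.

   Cut {0, ..., l^n - 1} into blocks of l consecutive
   points; alpha_1 is the rotation of block 0.  Elements of G_n carrying block
   0 onto three distinct other blocks conjugate alpha_1 to rotations of those
   blocks, and the twisted conjugates of such rotations are independent in
   the above sense; such movers exist exactly when n >= 3 or l >= 5. *)

Lemma metacyclic_morphim (gT rT : finGroupType) (G : {group gT})
    (f : {morphism G >-> rT}) : metacyclic G -> metacyclic (f @* G).
Proof.
case/metacyclicP=> K [cycK nsKG cycGK]; apply/metacyclicP.
exists (f @* K)%G; split; first exact: morphim_cyclic.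
  exact: morphim_normal.
by rewrite -(morphim_quotm f nsKG); apply: morphim_cyclic.
Qed.

Lemma metacyclicJ (gT : finGroupType) (G : {group gT}) x :
  metacyclic G -> metacyclic (G :^ x).
Proof. by move/(metacyclic_morphim (conjgm_morphism G x)); rewrite morphim_conj setIid. Qed.

(* A metacyclic group of exponent dividing m has order at most m^2: both the
   cyclic normal subgroup and the cyclic quotient have order dividing m. *)
Lemma metacyclic_card_exponent (gT : finGroupType) (E : {group gT}) m :
  0 < m -> metacyclic E -> exponent E %| m -> #|E| <= m * m.
Proof.
move=> m_gt0 /metacyclicP[C [cycC nsCE cycEC]] expE.
rewrite -(Lagrange (normal_sub nsCE)) -card_quotient ?normal_norm //.
apply: leq_mul; rewrite -exponent_cyclic //; apply: dvdn_leq m_gt0 _.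
  exact: dvdn_trans (exponentS (normal_sub nsCE)) expE.
exact: dvdn_trans (exponent_quotient _ _) expE.
Qed.

(* If A fixes p while u^k p (k < l) are pairwise distinct, the products
   h * u^k (h in A, k < l) are pairwise distinct, so K >= <A, u> is at least
   l times as large as A. *)
Lemma card_extend_by_orbit (T : finType) (K A : {group {perm T}}) (u : {perm T}) (p : T) l :
  A \subset K -> u \in K -> A \subset 'C[p | 'P] ->
  {in gtn l &, injective (fun k => (u ^+ k) p)} -> #|A| * l <= #|K|.
Proof.
move=> sAK uK fixA orb_u.
have fix_p g : g \in A -> g p = p by move/(subsetP fixA)/astab1P.
pose f (hk : {perm T} * 'I_l) := hk.1 * u ^+ hk.2.
have injf : {in setX A [set: 'I_l] &, injective f}.
  move=> [h k] [h' k'] /setXP[hA _] /setXP[h'A _]; rewrite /f /= => e.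
  have ek : k = k'.
    apply/val_inj/orb_u; rewrite ?inE ?ltn_ord //.
    by have := congr1 (fun g : {perm T} => g p) e; rewrite !permM !(fix_p h, fix_p h').
  by move: e; rewrite ek => /mulIg ->.
rewrite -(card_ord l) -cardsT -cardsX -(card_in_imset injf); apply: subset_leq_card.
apply/subsetP=> _ /imsetP[[h k] /setXP[hA _] ->].
by rewrite /f groupM ?groupX // (subsetP sAK).
Qed.

Section ThreeIndependent.
Variables (T : finType) (l : nat) (u1 u2 u3 : {perm T}) (p1 p2 p3 : T).
Hypotheses (u1p2 : u1 p2 = p2) (u1p3 : u1 p3 = p3) (u2p3 : u2 p3 = p3).
Hypotheses (orb1 : {in gtn l &, injective (fun k => (u1 ^+ k) p1)})
           (orb2 : {in gtn l &, injective (fun k => (u2 ^+ k) p2)})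
           (orb3 : {in gtn l &, injective (fun k => (u3 ^+ k) p3)}).

(* They generate a group of order at least l^3 (apply the previous lemma along
   the chain <u1> <= <u1, u2> <= <u1, u2, u3>). *)
Lemma card_gen_three : l * l * l <= #|<<[set u1; u2; u3]>>|.
Proof.
have fixes (X : {set {perm T}}) (p : T) :
    {in X, forall u : {perm T}, u p = p} -> <<X>> \subset 'C[p | 'P].
  by move=> fixX; rewrite gen_subG; apply/subsetP=> u /fixX up; apply/astab1P.
have card1 : l <= #|<[u1]>|.
  rewrite -[l]mul1n -(cards1 (1 : {perm T})).
  by apply: (card_extend_by_orbit _ (cycle_id u1) _ orb1); rewrite sub1G.
have card2 : #|<[u1]>| * l <= #|<<[set u1; u2]>>|.
  apply: (card_extend_by_orbit _ _ _ orb2).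
  - by rewrite cycle_subG mem_gen // !inE eqxx.
  - by rewrite mem_gen // !inE eqxx orbT.
  - by rewrite cycle_subG; apply/astab1P.
apply: leq_trans (card_extend_by_orbit (A := <<[set u1; u2]>>%G) _ _ _ orb3).
- by rewrite leq_mul2r (leq_trans (leq_mul card1 (leqnn l)) card2) orbT.
- by apply/genS/subsetP=> x; rewrite !inE => /orP[]->; rewrite ?orbT.
- by rewrite mem_gen // !inE eqxx !orbT.
by apply: fixes => u; rewrite !inE => /orP[] /eqP ->.
Qed.

(* If moreover they commute and have order dividing l, they generate an
   abelian group of exponent dividing l and order >= l^3 > l^2, which cannot
   lie in a metacyclic group. *)
Lemma metacyclic_no_three_independent (M : {group {perm T}}) :
  1 < l -> metacyclic M -> [&& u1 \in M, u2 \in M & u3 \in M] ->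
  commute u1 u2 -> commute u1 u3 -> commute u2 u3 ->
  [/\ u1 ^+ l = 1, u2 ^+ l = 1 & u3 ^+ l = 1] -> False.
Proof.
move=> l_gt1 metaM /and3P[u1M u2M u3M] c12 c13 c23 [o1 o2 o3].
set X := [set u1; u2; u3].
have cXX : abelian X.
  apply/centsP=> x; rewrite !inE => /orP[/orP[]|] /eqP-> y;
  rewrite !inE => /orP[/orP[]|] /eqP->; by [|apply: commute_sym].
have expX : exponent <<X>> %| l.
  rewrite abelian_exponent_gen //; apply/exponentP=> x.
  by rewrite !inE => /orP[/orP[]|] /eqP->.
have sXM : <<X>> \subset M.
  by rewrite gen_subG; apply/subsetP=> x; rewrite !inE => /orP[/orP[]|] /eqP->.
have := metacyclic_card_exponent (ltnW l_gt1) (metacyclicS sXM metaM) expX.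
apply/negP; rewrite -ltnNge (leq_trans _ card_gen_three) //.
by rewrite ltn_Pmulr // muln_gt0 ltnW.
Qed.

End ThreeIndependent.

Section DoubleCosets.
Variables (gT : finGroupType) (A B : {group gT}).

Lemma card_dcoset x : (#|dcoset A B x| * #|A :^ x :&: B| = #|A| * #|B|)%N.
Proof.
rewrite /dcoset.
have -> : A :* x = x *: (A :^ x) by rewrite conjsgE lcosetKV.
by rewrite -mulgA card_lcoset -(cardJg A x) mul_cardG.
Qed.

Lemma dcoset_split_prime x :
  prime #|B| -> ~~ (B \subset A :^ x) -> #|dcoset A B x| = (#|A| * #|B|)%N.
Proof.
by move=> prB nsB; rewrite -(card_dcoset x) setIC prime_TIg ?cards1 ?muln1.
Qed.

Lemma dcoset_eq_mem x c :
  dcoset A B (x * c) = dcoset A B x -> exists2 h, h \in B & c * h \in A :^ x.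
Proof.
have : x * c \in dcoset A B (x * c) by rewrite -{1}[x * c]mulg1 mem_mulg ?rcoset_refl.
move=> + eq_dc; rewrite eq_dc => /mulsgP[_ h /rcosetP[d Ad ->] Bh e].
exists h^-1; first by rewrite groupV.
by rewrite -[c](mulKg x) e !mulgA mulgK -mulgA -conjgE memJ_conjg.
Qed.
End DoubleCosets.

Lemma Ssplit_gt1 (gT : finGroupType) (G : {set gT}) (A B : {group gT}) x y :
  x \in G -> y \in G -> #|dcoset A B x| = (#|A| * #|B|)%N ->
  #|dcoset A B y| = (#|A| * #|B|)%N -> dcoset A B x != dcoset A B y ->
  1 < Ssplit G A B.
Proof.
move=> Gx Gy splitx splity neq; apply/card_gt1P.
by exists (dcoset A B x), (dcoset A B y); split=> //; apply/imsetP;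
  [exists x | exists y]; rewrite // inE ?Gx ?Gy ?splitx ?splity /=.
Qed.

(* Then some
   a^g_i is outside D, giving a split D x H (x = g_i^-1); right multiplying
   x by any a^g_i keeps it split, and if all these double cosets coincided
   with D x H, the twisted conjugates a^g_i * h_i would all lie in D^x. *)
Lemma Ssplit_gt1_twisted (gT : finGroupType) (G D : {group gT}) (a g1 g2 g3 : gT) :
  prime #[a] -> metacyclic D -> a \in G -> [&& g1 \in G, g2 \in G & g3 \in G] ->
  [/\ commute (a ^ g1) a, commute (a ^ g2) a & commute (a ^ g3) a] ->
  (forall (K : {group gT}) h1 h2 h3, metacyclic K ->
     [&& h1 \in <[a]>, h2 \in <[a]> & h3 \in <[a]>] ->
     ~~ [&& a ^ g1 * h1 \in K, a ^ g2 * h2 \in K & a ^ g3 * h3 \in K]) ->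
  1 < Ssplit G D <[a]>.
Proof.
move=> pr_a metaD aG /and3P[g1G g2G g3G] [ca1 ca2 ca3] twisted.
have splitH y : a \notin D :^ y -> #|dcoset D <[a]> y| = (#|D| * #|<[a]>|)%N.
  by move=> aNDy; rewrite dcoset_split_prime ?cycle_subG -?orderE.
have [x xG aNDx] : exists2 x, x \in G & a \notin D :^ x.
  have pick g : g \in G -> a ^ g \notin D -> exists2 x, x \in G & a \notin D :^ x.
    by move=> gG aDg; exists g^-1; rewrite ?groupV ?mem_conjgV.
  have [D1|] := boolP (a ^ g1 \in D); last exact: pick g1G.
  have [D2|] := boolP (a ^ g2 \in D); last exact: pick g2G.
  have [D3|] := boolP (a ^ g3 \in D); last exact: pick g3G.
  by have := twisted D 1 1 1 metaD; rewrite !group1 !mulg1 D1 D2 D3 => /(_ isT).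
have aNDxc c : commute c a -> a \notin D :^ (x * c).
  by move=> ca; rewrite conjsgM -{1}(_ : a ^ c = a) ?memJ_conjg // conjgE -ca mulKg.
have [c [cG ca neq]] : exists c, [/\ c \in G, commute c a &
    dcoset D <[a]> (x * c) != dcoset D <[a]> x].
  have good g : g \in G -> commute (a ^ g) a ->
      dcoset D <[a]> (x * a ^ g) != dcoset D <[a]> x ->
      exists c, [/\ c \in G, commute c a & dcoset D <[a]> (x * c) != dcoset D <[a]> x].
    by move=> gG cag ne; exists (a ^ g); rewrite groupJ.
  have [e1|] := eqVneq (dcoset D <[a]> (x * a ^ g1)) (dcoset D <[a]> x); last exact: good.
  have [e2|] := eqVneq (dcoset D <[a]> (x * a ^ g2)) (dcoset D <[a]> x); last exact: good.
  have [e3|] := eqVneq (dcoset D <[a]> (x * a ^ g3)) (dcoset D <[a]> x); last exact: good.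
  have [h1 H1 K1] := dcoset_eq_mem e1.
  have [h2 H2 K2] := dcoset_eq_mem e2.
  have [h3 H3 K3] := dcoset_eq_mem e3.
  by have := twisted _ h1 h2 h3 (metacyclicJ x metaD); rewrite H1 H2 H3 K1 K2 K3 => /(_ isT).
by apply: (Ssplit_gt1 (groupM xG cG) xG); rewrite ?splitH ?aNDxc.
Qed.

Section BlockRotations.
Variables (N l : nat).
Hypothesis l_gt0 : 0 < l.

Definition block_rot (j : nat) (s : {perm 'I_N}) : Prop :=
  forall q : 'I_N,
    val (s q) = if q %/ l == j then j * l + (q %% l).+1 %% l else val q.

Definition moves_block0 (j : nat) (g : {perm 'I_N}) : Prop :=
  forall r : 'I_N, r < l -> val (g r) = j * l + r.

Lemma divn_block j x : x < l -> (j * l + x) %/ l = j.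
Proof. by move=> xl; rewrite divnMDl // divn_small // addn0. Qed.

Lemma modn_block j x : x < l -> (j * l + x) %% l = x.
Proof. by move=> xl; rewrite modnMDl modn_small. Qed.

Section OneRotation.
Variables (j : nat) (s : {perm 'I_N}).
Hypothesis rot_s : block_rot j s.

Lemma block_rotX k (q : 'I_N) :
  val ((s ^+ k) q) = if q %/ l == j then j * l + (q %% l + k) %% l else val q.
Proof.
elim: k q => [|k IHk] q.
  by rewrite expg0 perm1 addn0; case: eqP => // <-; rewrite modn_mod -divn_eq.
rewrite expgSr permM rot_s !IHk; case: (eqVneq (q %/ l) j) => [qj|/negbTE-> //].
by rewrite divn_block ?ltn_pmod // eqxx modn_block ?ltn_pmod // -addn1 modnDml -addnA addn1.
Qed.

Lemma block_rotX_fix k (q : 'I_N) : q %/ l != j -> (s ^+ k) q = q.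
Proof. by move=> /negbTE qj; apply: val_inj; rewrite block_rotX qj. Qed.

Lemma block_rotX_block k (q : 'I_N) : (s ^+ k) q %/ l = q %/ l.
Proof. by rewrite block_rotX; case: eqP => // <-; rewrite divn_block ?ltn_pmod. Qed.

Lemma block_rot_fix (q : 'I_N) : q %/ l != j -> s q = q.
Proof. by move/(block_rotX_fix 1); rewrite expg1. Qed.

Lemma block_rot_block (q : 'I_N) : s q %/ l = q %/ l.
Proof. by have := block_rotX_block 1 q; rewrite expg1. Qed.

Lemma block_rot_expl : s ^+ l = 1.
Proof.
apply/permP=> q; apply: val_inj; rewrite perm1 block_rotX.
by case: eqP => // <-; rewrite modnDr modn_mod -divn_eq.
Qed.

Lemma block_rot_order (q : 'I_N) : q %/ l = j -> #[s] = l.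
Proof.
move=> qj; apply/eqP; rewrite eqn_dvd order_dvdn block_rot_expl eqxx /=.
have := congr1 (fun g : {perm 'I_N} => val (g q)) (expg_order s).
rewrite /= perm1 block_rotX qj eqxx {2}(divn_eq q l) qj => /addnI e.
by rewrite /dvdn -(mod0n l) -(eqn_modDl (q %% l)) e addn0 modn_mod.
Qed.

End OneRotation.

(* Rotations of distinct blocks have disjoint supports, hence commute. *)
Lemma block_rot_commute i j (s t : {perm 'I_N}) :
  i != j -> block_rot i s -> block_rot j t -> commute s t.
Proof.
move=> ij rot_s rot_t; apply/permP=> q; rewrite !permM.
case: (eqVneq (q %/ l) i) => [qi|qNi].
  by rewrite !(block_rot_fix rot_t) ?(block_rot_block rot_s) ?qi.
rewrite (block_rot_fix rot_s qNi); case: (eqVneq (q %/ l) j) => [qj|qNj].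
  by rewrite (block_rot_fix rot_s) // (block_rot_block rot_t) qj eq_sym.
by rewrite !(block_rot_fix rot_t qNj) (block_rot_fix rot_s qNi).
Qed.

Lemma block_rotJ j (a g : {perm 'I_N}) :
  block_rot 0 a -> moves_block0 j g -> block_rot j (a ^ g).
Proof.
move=> rot_a mv_g q; rewrite conjgE !permM.
set p := g^-1 q; have qE : q = g p by rewrite /p permKV.
case: (ltnP p l) => [pl|lp].
  have ap : val (a p) = p.+1 %% l.
    by rewrite rot_a divn_small // eqxx mul0n add0n (modn_small pl).
  rewrite mv_g ?ap ?ltn_pmod // qE mv_g // divn_block // eqxx modn_block //.
have ap : a p = p.
  by apply: (block_rot_fix rot_a); rewrite -lt0n divn_gt0.
rewrite ap -qE; case: eqP => // qj; exfalso.
have ql : q %% l < N by apply: leq_ltn_trans (leq_mod q l) (ltn_ord q).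
have gq : g (Ordinal ql) = q.
  by apply: val_inj; rewrite mv_g /= ?ltn_pmod // -qj -divn_eq.
by move: lp; rewrite -(perm_inj (etrans gq qE)) /= leqNgt ltn_pmod.
Qed.

Section Twisted.
Variable a : {perm 'I_N}.
Hypothesis rot_a : block_rot 0 a.

Lemma cycle_fix_outside h (q : 'I_N) : h \in <[a]> -> q %/ l != 0 -> h q = q.
Proof. by case/cycleP=> k ->; apply: block_rotX_fix. Qed.

Lemma commute_cycle j (c h : {perm 'I_N}) :
  block_rot j c -> j != 0 -> h \in <[a]> -> commute c h.
Proof.
move=> rot_c j0 /cycleP[k ->]; apply: commuteX.
by apply: block_rot_commute rot_c rot_a.
Qed.

Section OneTwist.
Variables (j : nat) (c h : {perm 'I_N}).
Hypotheses (rot_c : block_rot j c) (j_neq0 : j != 0) (h_a : h \in <[a]>).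

Lemma twistedX k (q : 'I_N) : q %/ l != 0 -> ((c * h) ^+ k) q = (c ^+ k) q.
Proof.
move=> q0; rewrite expgMn ?permM; last exact: commute_cycle rot_c j_neq0 h_a.
by rewrite cycle_fix_outside ?groupX // (block_rotX_block rot_c).
Qed.

Lemma twisted_expl : (c * h) ^+ l = 1.
Proof.
rewrite expgMn; last exact: commute_cycle rot_c j_neq0 h_a.
rewrite (block_rot_expl rot_c) mul1g.
by case/cycleP: h_a => k ->; rewrite -expgM mulnC expgM (block_rot_expl rot_a) expg1n.
Qed.

Lemma twisted_fix (q : 'I_N) : q %/ l != 0 -> q %/ l != j -> (c * h) q = q.
Proof.
by move=> q0 qj; have := twistedX 1 q0; rewrite !expg1 (block_rot_fix rot_c).
Qed.

Lemma twisted_orbit (p : 'I_N) :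
  val p = (j * l)%N -> {in gtn l &, injective (fun k => ((c * h) ^+ k) p)}.
Proof.
move=> pE k k'; rewrite !inE => kl k'l.
have pj : p %/ l = j by rewrite pE mulnK.
rewrite /= !twistedX ?pj // => /(congr1 val); rewrite !(block_rotX rot_c) pj eqxx.
by rewrite pE modnMl !add0n !modn_small // => /addnI.
Qed.

End OneTwist.

Lemma twisted_commute i j (c c' h h' : {perm 'I_N}) :
  block_rot i c -> block_rot j c' -> i != 0 -> j != 0 -> i != j ->
  h \in <[a]> -> h' \in <[a]> -> commute (c * h) (c' * h').
Proof.
move=> rot_c rot_c' i0 j0 ij h_a h'_a.
apply: commuteM; apply/commute_sym/commuteM.
- exact/commute_sym/(block_rot_commute ij rot_c rot_c').
- exact: commute_cycle rot_c' j0 h_a.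
- exact/commute_sym/(commute_cycle rot_c i0 h'_a).
- exact: (centsP (cycle_abelian a)).
Qed.

(* Key lemma: twisted rotations of three distinct nonzero blocks are
   independent commuting elements of order l, so no metacyclic group contains
   all three. *)
Lemma twisted_rotations_not_in_metacyclic (M : {group {perm 'I_N}}) j1 j2 j3
    (c1 c2 c3 h1 h2 h3 : {perm 'I_N}) (p1 p2 p3 : 'I_N) :
  1 < l -> metacyclic M -> uniq [:: 0; j1; j2; j3] ->
  block_rot j1 c1 -> block_rot j2 c2 -> block_rot j3 c3 ->
  [/\ val p1 = j1 * l, val p2 = j2 * l & val p3 = j3 * l]%N ->
  [&& h1 \in <[a]>, h2 \in <[a]> & h3 \in <[a]>] ->
  ~~ [&& c1 * h1 \in M, c2 * h2 \in M & c3 * h3 \in M].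
Proof.
move=> l_gt1 metaM uniq_j rot1 rot2 rot3 [p1E p2E p3E] /and3P[h1a h2a h3a].
move: uniq_j; rewrite /= !inE !negb_or ![0 == _]eq_sym.
case/and4P=> /and3P[n1 n2 n3] /andP[n12 n13] n23 _.
have blk (p : 'I_N) j : val p = (j * l)%N -> p %/ l = j by move=> ->; rewrite mulnK.
apply/negP=> /and3P[M1 M2 M3].
apply: (metacyclic_no_three_independent (p1 := p1) (p2 := p2) (p3 := p3)
          _ _ _ _ _ _ l_gt1 metaM).
- by apply: (twisted_fix rot1 n1 h1a); rewrite (blk _ _ p2E) // eq_sym.
- by apply: (twisted_fix rot1 n1 h1a); rewrite (blk _ _ p3E) // eq_sym.
- by apply: (twisted_fix rot2 n2 h2a); rewrite (blk _ _ p3E) // eq_sym.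
- exact: (twisted_orbit rot1 n1 h1a p1E).
- exact: (twisted_orbit rot2 n2 h2a p2E).
- exact: (twisted_orbit rot3 n3 h3a p3E).
- by rewrite M1 M2 M3.
- exact: twisted_commute.
- exact: twisted_commute.
- exact: twisted_commute.
by split; apply: twisted_expl.
Qed.

End Twisted.

End BlockRotations.

Section Generators.
Variables (l n : nat).
Hypothesis l_gt0 : 0 < l.

Lemma alphaE (r : 'I_n) (i : 'I_(l ^ n)) : i < l ^ r.+1 ->
  val (alpha l r i) = (i %% l ^ r + (i %/ l ^ r).+1 %% l * l ^ r)%N.
Proof. by rewrite /alpha permE ffunE /= /alpha_fun l_gt0 => ->. Qed.

Lemma alpha_fix (r : 'I_n) (i : 'I_(l ^ n)) : l ^ r.+1 <= i -> alpha l r i = i.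
Proof.
move=> ri; apply: val_inj.
by rewrite /alpha permE ffunE /= /alpha_fun [i < _]ltnNge ri !andbF.
Qed.

Lemma alpha_in (r : 'I_n) : alpha l r \in Gn l n.
Proof. by apply/mem_gen/imsetP; exists r. Qed.

Lemma alpha1_block_rot (n_gt0 : 0 < n) : block_rot l 0 (alpha l (Ordinal n_gt0)).
Proof.
move=> q; case: (ltnP q l) => [ql|lq].
  rewrite alphaE /= ?expn1 // expn0 modn1 divn1 muln1 add0n.
  by rewrite (divn_small ql) eqxx mul0n add0n (modn_small ql).
rewrite alpha_fix /= ?expn1 //; case: eqP => // q0.
by move: lq; rewrite -divn_gt0 // q0.
Qed.

Lemma alpha1_order (n_gt0 : 0 < n) : #[alpha l (Ordinal n_gt0)] = l.
Proof.
have lN_gt0 : 0 < l ^ n by rewrite expn_gt0 l_gt0.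
by rewrite (block_rot_order l_gt0 (alpha1_block_rot n_gt0) (q := Ordinal lN_gt0)) ?div0n.
Qed.

Lemma alpha_shiftX (r : 'I_n) (i : 'I_(l ^ n)) k :
  (i %/ l ^ r + k < l)%N -> val ((alpha l r ^+ k) i) = (i + k * l ^ r)%N.
Proof.
have lr_gt0 : 0 < l ^ r by rewrite expn_gt0 l_gt0.
elim: k => [|k IHk] qk; first by rewrite expg0 perm1 addn0.
have qk' : (i %/ l ^ r + k < l)%N by apply: leq_ltn_trans qk; rewrite leq_add2l.
have ikr : (i + k * l ^ r < l ^ r.+1)%N by rewrite expnS -ltn_divLR // divnDMl.
rewrite expgSr permM alphaE IHk // divnDMl // [i + _]addnC modnMDl -addnS (modn_small qk).
by rewrite mulnDl addnA [_ %% _ + _]addnC -divn_eq.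
Qed.


Lemma alpha_shift_moves (r : 'I_n) k j : 0 < r -> k < l -> (j * l = k * l ^ r)%N ->
  moves_block0 l j (alpha l r ^+ k).
Proof.
move=> r_gt0 kl jE i il; rewrite alpha_shiftX; first by rewrite jE addnC.
have l_le : l <= l ^ r by rewrite -(prednK r_gt0) expnS leq_pmulr ?expn_gt0 ?l_gt0.
by rewrite divn_small ?(leq_trans il).
Qed.
End Generators.

(* Three elements of G_n moving block 0 onto three distinct nonzero blocks:
   alpha_2, alpha_3 and alpha_2 alpha_3 when n >= 3, and alpha_2, alpha_2^2,
   alpha_2^3 when l >= 5. *)
Lemma block_movers l n (l_gt1 : 1 < l) (n_ge2 : 2 <= n)
    (hcase : 3 <= n \/ (n = 2 /\ 5 <= l)) :
  exists j1 j2 j3 (g1 g2 g3 : {perm 'I_(l ^ n)}),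
  [/\ uniq [:: 0; j1; j2; j3],
      [&& g1 \in Gn l n, g2 \in Gn l n & g3 \in Gn l n] &
      [/\ moves_block0 l j1 g1, moves_block0 l j2 g2 & moves_block0 l j3 g3]].
Proof.
have l_gt0 : 0 < l := ltnW l_gt1.
set a2 := alpha l (Ordinal n_ge2).
have a2G k : a2 ^+ k \in Gn l n by rewrite groupX ?alpha_in.
have mv2 k : k < l -> moves_block0 l k (a2 ^+ k).
  by move=> kl; apply: alpha_shift_moves; rewrite ?expn1.
case: hcase => [n_ge3 | [_ l_gt4]]; last first.
  exists 1%N, 2%N, 3%N, (a2 ^+ 1), (a2 ^+ 2), (a2 ^+ 3).
  by split; rewrite ?a2G //; split; apply: mv2; apply: leq_trans l_gt4.
set a3 := alpha l (Ordinal n_ge3).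
have sh3 (i : 'I_(l ^ n)) : i < l * l -> val (a3 i) = (l * l + i)%N.
  move=> il; have := alpha_shiftX (r := Ordinal n_ge3) (i := i) (k := 1) l_gt0.
  by rewrite expg1 mul1n /= -mulnn divn_small // => /(_ l_gt1) ->; rewrite addnC.
have ll_gt : forall r, r < l -> r < l * l.
  by move=> r rl; apply: leq_trans rl _; rewrite leq_pmulr.
exists 1%N, l, l.+1, (a2 ^+ 1), a3, (a2 ^+ 1 * a3); split.
- rewrite /= !inE !negb_or eqSS ![0 == _]eq_sym -!lt0n l_gt0.
  by rewrite (ltn_eqF l_gt1) (ltn_eqF (ltnSn l)).
- by rewrite a2G groupM ?alpha_in.
split=> [|r rl|r rl]; first exact: mv2.
  by rewrite sh3 ?ll_gt.
rewrite permM sh3 (mv2 1%N l_gt1 r rl) mul1n; first by rewrite mulSn addnA [l + _]addnC.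
by rewrite (leq_trans (_ : _ < l + l)) ?ltn_add2l // addnn -mul2n leq_mul2r l_gt1 orbT.
Qed.

Lemma alpha_twisted_conjugates l n (l_gt1 : 1 < l) (n_ge2 : 2 <= n)
    (hcase : 3 <= n \/ (n = 2 /\ 5 <= l)) :
  let a := alpha l (Ordinal (ltnW n_ge2)) in
  exists g1 g2 g3, [/\ [&& g1 \in Gn l n, g2 \in Gn l n & g3 \in Gn l n],
    [/\ commute (a ^ g1) a, commute (a ^ g2) a & commute (a ^ g3) a] &
    forall (K : {group {perm 'I_(l ^ n)}}) h1 h2 h3, metacyclic K ->
     [&& h1 \in <[a]>, h2 \in <[a]> & h3 \in <[a]>] ->
     ~~ [&& a ^ g1 * h1 \in K, a ^ g2 * h2 \in K & a ^ g3 * h3 \in K]].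
Proof.
move=> a; have l_gt0 := ltnW l_gt1.
have rot_a : block_rot l 0 a := alpha1_block_rot l_gt0 (ltnW n_ge2).
have [j1 [j2 [j3 [g1 [g2 [g3 [uniq_j gG [mv1 mv2 mv3]]]]]]]] := block_movers l_gt1 n_ge2 hcase.
have rot1 := block_rotJ l_gt0 rot_a mv1.
have rot2 := block_rotJ l_gt0 rot_a mv2.
have rot3 := block_rotJ l_gt0 rot_a mv3.
have lN_gt0 : 0 < l ^ n by rewrite expn_gt0 l_gt0.
pose z : 'I_(l ^ n) := Ordinal lN_gt0.
have pts : [/\ val (g1 z) = j1 * l, val (g2 z) = j2 * l & val (g3 z) = j3 * l]%N.
  by rewrite mv1 ?mv2 ?mv3 // !addn0.
have [j1_0 j2_0 j3_0] : [/\ j1 != 0, j2 != 0 & j3 != 0].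
  by move: uniq_j; rewrite /= !inE !negb_or ![0 == _]eq_sym => /and4P[/and3P[]].
have comm j g : j != 0 -> block_rot l j (a ^ g) -> commute (a ^ g) a.
  by move=> j0 rot_g; apply: (block_rot_commute (N := l ^ n) l_gt0 j0 rot_g rot_a).
exists g1, g2, g3; split=> //.
  by split; [apply: comm j1_0 rot1 | apply: comm j2_0 rot2 | apply: comm j3_0 rot3].
by move=> K h1 h2 h3 metaK; apply: twisted_rotations_not_in_metacyclic rot1 rot2 rot3 pts.
Qed.

Theorem mainTheorem15 (l n : nat) (hl : prime l) (hn : 2 <= n)
  (hcase : 3 <= n \/ (n = 2 /\ 5 <= l))
  (D : {group {perm 'I_(l ^ n)}}) (hDG : D \subset Gn l n) (hD : metacyclic D) :
  1 < Ssplit (Gn l n) D (Hgrp l (ltnW hn)).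
Proof.
have [g1 [g2 [g3 [gG ca twisted]]]] := alpha_twisted_conjugates (prime_gt1 hl) hn hcase.
apply: Ssplit_gt1_twisted gG ca twisted; rewrite ?alpha_in //.
by rewrite alpha1_order ?(prime_gt0 hl).
Qed.
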